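(* In the setting described in the context, with initialization parameters $R=v=\frac{1}{\sqrt{2k}}$ (i.e. second layer $\mathbf{v}=(v,\dots,v,-v,\dots,-v)$ with $v=1/\sqrt{2k}$ and all rows of $W_0$ of norm at most $1/\sqrt{2k}$), SGD converges to a global minimum of $L_S$ after performing at most $$M_k=\frac{\|\mathbf{w}^*\|^2}{\alpha^2}+O\!\left(\frac{\|\mathbf{w}^*\|^2}{\min\{\eta,\sqrt{\eta}\}}\right)$$ non-zero updates, where the implied constant depends only on $\alpha$ (in particular not on $k$).
   Context: Data: $S=\{(\mathbf{x}_1,y_1),\dots,(\mathbf{x}_n,y_n)\}$ with $\|\mathbf{x}_i\|\le1$, $y_i\in\{\pm1\}$, and $\mathbf{w}^*\in\mathbb{R}^d$ with $y_i\langle\mathbf{w}^*,\mathbf{x}_i\rangle\ge1$ for all $i$ (so $\|\mathbf{w}^*\|\ge1$). Network $N_W(\mathbf{x})=\mathbf{v}^\top\sigma(W\mathbf{x})$, $W\in\mathbb{R}^{2k\times d}$, $\sigma(z)=\max\{\alpha z,z\}$ with $0<\alpha<1$, fixed $\mathbf{v}=(v,\dots,v,-v,\dots,-v)\in\mathbb{R}^{2k}$. Loss $L_S(W)=\frac1n\sum_i\max\{1-y_iN_W(\mathbf{x}_i),0\}$. SGD: batch size 1, constant learning rate $\eta>0$, only $W$ is updated; at each iteration an example $(\mathbf{x}_t,y_t)\in S$ is picked; if $y_tN_{W_{t-1}}(\mathbf{x}_t)\ge1$ nothing changes, otherwise the $i$-th row ($i\le k$) gets $+\eta v p y_t\mathbf{x}_t$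 and the $(k+i)$-th row gets $-\eta v q y_t\mathbf{x}_t$, where $p$ (resp. $q$) equals $1$ if the row's inner product with $\mathbf{x}_t$ is $\ge0$ and $\alpha$ otherwise. Such an update is called non-zero. *)

From HB Require Import structures.
From mathcomp Require Import all_boot all_order all_algebra.
From mathcomp Require Import reals.
Set Implicit Arguments. Unset Strict Implicit. Unset Printing Implicit Defensive.
Import Order.TTheory GRing.Theory Num.Theory.
Local Open Scope ring_scope.

Section Defs.
Variable R : realType.

Definition dotp (d : nat) (u w : 'rV[R]_d) : R := \sum_(j < d) u 0 j * w 0 j.
Definition vnorm (d : nat) (u : 'rV[R]_d) : R := Num.sqrt (dotp u u).

Definition leaky (alpha z : R) : R := Num.max (alpha * z) z.

(* Sign pattern of the fixed second layer: +1 on the first k neurons, -1 on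
   the last k neurons; the second layer is v * vsign. *)
Definition vsign (k : nat) (i : 'I_(k + k)) : R := if (i < k)%N then 1 else -1.

Definition net (alpha v : R) (k d : nat) (W : 'M[R]_(k + k, d)) (x : 'rV[R]_d) : R :=
  \sum_(i < k + k) v * vsign i * leaky alpha (dotp (row i W) x).

Definition lossS (alpha v : R) (k d n : nat) (X : 'I_n -> 'rV[R]_d) (Y : 'I_n -> R)
  (W : 'M[R]_(k + k, d)) : R :=
  (\sum_(i < n) Num.max (1 - Y i * net alpha v W (X i)) 0) / n%:R.

Definition nonzero_upd (alpha v : R) (k d : nat) (W : 'M[R]_(k + k, d))
  (x : 'rV[R]_d) (y : R) : bool := y * net alpha v W x < 1.

(* One SGD step (batch size 1, learning rate eta, only W updated). *)
Definition sgd_step (alpha v eta : R) (k d : nat) (W : 'M[R]_(k + k, d))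
  (x : 'rV[R]_d) (y : R) : 'M[R]_(k + k, d) :=
  if nonzero_upd alpha v W x y then
    \matrix_(i, j) (W i j + eta * v * vsign i *
                     (if 0 <= dotp (row i W) x then 1 else alpha) * y * x 0 j)
  else W.

Fixpoint sgd_traj (alpha v eta : R) (k d n : nat) (X : 'I_n -> 'rV[R]_d)
  (Y : 'I_n -> R) (sched : nat -> 'I_n) (W0 : 'M[R]_(k + k, d)) (t : nat)
  : 'M[R]_(k + k, d) :=
  match t with
  | 0 => W0
  | t'.+1 => sgd_step alpha v eta
               (sgd_traj alpha v eta X Y sched W0 t') (X (sched t')) (Y (sched t'))
  end.

Definition num_nonzero (alpha v eta : R) (k d n : nat) (X : 'I_n -> 'rV[R]_d)
  (Y : 'I_n -> R) (sched : nat -> 'I_n) (W0 : 'M[R]_(k + k, d)) (T : nat) : nat :=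
  \sum_(t < T) nonzero_upd alpha v (sgd_traj alpha v eta X Y sched W0 t)
                 (X (sched t)) (Y (sched t)).

End Defs.

From mathcomp Require Import all_boot all_order all_algebra.
From mathcomp Require Import reals boolp.
From mathcomp Require Import ring lra.
Set Implicit Arguments. Unset Strict Implicit. Unset Printing Implicit Defensive.
Import Order.TTheory GRing.Theory Num.Theory.
Local Open Scope ring_scope.

(* Perceptron-style argument.  Let U be the matrix with rows v s_i w*, where s_i is
   the sign of the i-th output weight; with v^2 * 2k = 1 we have ||U|| = ||w*||.  A
   non-zero update moves row i by eta v s_i p_i y x with slope p_i in [alpha, 1], so
   it raises <W, U> by at least eta alpha (as y <w*, x> >= 1), while ||W||^2 grows by
   at most 2 eta + eta^2 (the cross term is 2 eta y N_W(x) < 2 eta).  After m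
   non-zero updates Cauchy-Schwarz <W, U> <= ||W|| ||w*|| thus forces
   m eta alpha - ||w*|| <= ||w*|| sqrt(1 + m (2 eta + eta^2)), which bounds m.  Once
   the count stops growing SGD is frozen, and as every example is visited again the
   frozen weights fit all examples with margin 1, i.e. have zero loss. *)

Lemma sum_CauchySchwarz (R : realDomainType) (I : finType) (f g : I -> R) :
  (\sum_i f i * g i) ^+ 2 <= (\sum_i f i * f i) * (\sum_i g i * g i).
Proof.
set F := \sum_i f i * f i; set G := \sum_i g i * g i; set P := \sum_i f i * g i.
have FG : \sum_i \sum_j f i * f i * (g j * g j) = F * G by rewrite big_distrlr.
have GF : \sum_i \sum_j f j * f j * (g i * g i) = F * G.
  by rewrite exchange_big big_distrlr.
have PP : \sum_i \sum_j f i * g i * (f j * g j) = P ^+ 2 by rewrite expr2 big_distrlr.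
(* Lagrange's identity: the defect 2 (F G - P^2) is a sum of squares. *)
have : 0 <= \sum_i \sum_j (f i * g j - f j * g i) ^+ 2.
  by do 2!(apply: sumr_ge0 => ? _); exact: sqr_ge0.
rewrite (eq_bigr (fun i => \sum_j f i * f i * (g j * g j) + \sum_j f j * f j * (g i * g i)
                          - 2 * \sum_j f i * g i * (f j * g j))); last first.
  move=> i _; rewrite mulr_sumr -big_split -sumrB; apply: eq_bigr => j _ /=; ring.
rewrite sumrB big_split -mulr_sumr /= FG GF PP; clearbody F G P; lra.
Qed.

Section DotProduct.
Variables (R : realType) (d : nat).
Implicit Types u w x : 'rV[R]_d.

Lemma dotpC u w : dotp u w = dotp w u.
Proof. by apply: eq_bigr => j _; rewrite mulrC. Qed.

Lemma dotpDl u w x : dotp (u + w) x = dotp u x + dotp w x.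
Proof. by rewrite /dotp -big_split; apply: eq_bigr => j _; rewrite mxE mulrDl. Qed.

Lemma dotpZl c u x : dotp (c *: u) x = c * dotp u x.
Proof. by rewrite /dotp mulr_sumr; apply: eq_bigr => j _; rewrite mxE mulrA. Qed.

Lemma dotp_ge0 u : 0 <= dotp u u.
Proof. by apply: sumr_ge0 => j _; rewrite -expr2 sqr_ge0. Qed.

Lemma dotp_CauchySchwarz u w : dotp u w ^+ 2 <= dotp u u * dotp w w.
Proof. exact: sum_CauchySchwarz. Qed.

Lemma dotp_addZr u x c :
  dotp (u + c *: x) (u + c *: x) = dotp u u + 2 * c * dotp u x + c ^+ 2 * dotp x x.
Proof.
rewrite dotpDl dotpZl [dotp u _]dotpC [dotp x _]dotpC !dotpDl !dotpZl [dotp x u]dotpC.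
ring.
Qed.

Lemma vnorm_ge0 u : 0 <= vnorm u.
Proof. exact: sqrtr_ge0. Qed.

Lemma vnorm_sq u : vnorm u ^+ 2 = dotp u u.
Proof. by rewrite sqr_sqrtr // dotp_ge0. Qed.

Lemma vnorm_le1 u : (vnorm u <= 1) = (dotp u u <= 1).
Proof. by rewrite -vnorm_sq expr_le1 // vnorm_ge0. Qed.

Lemma vnorm_ge1_of_margin w x y :
  dotp x x <= 1 -> y ^+ 2 = 1 -> 1 <= y * dotp w x -> 1 <= vnorm w.
Proof.
move=> x_le1 y_sq margin.
suff : 1 <= vnorm w ^+ 2 by rewrite expr_ge1 ?vnorm_ge0.
rewrite vnorm_sq.
have margin_sq : 1 <= dotp w x ^+ 2.
  by rewrite -[dotp w x ^+ 2]mul1r -{2}y_sq -exprMn expr_ge1 // (le_trans ler01).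
apply: le_trans margin_sq (le_trans (dotp_CauchySchwarz w x) _).
by rewrite ler_piMr ?dotp_ge0.
Qed.

End DotProduct.

Definition mxdot {R : realType} {m d : nat} (A B : 'M[R]_(m, d)) : R :=
  \sum_(i < m) dotp (row i A) (row i B).

Section MatrixDotProduct.
Variables (R : realType) (m d : nat).
Implicit Types A B : 'M[R]_(m, d).

Lemma mxdot_ge0 A : 0 <= mxdot A A.
Proof. by apply: sumr_ge0 => i _; exact: dotp_ge0. Qed.

Lemma mxdot_CauchySchwarz A B : mxdot A B ^+ 2 <= mxdot A A * mxdot B B.
Proof.
have mxdotE C D : mxdot C D = \sum_(p : 'I_m * 'I_d) C p.1 p.2 * D p.1 p.2.
  by rewrite /mxdot /dotp pair_bigA; apply: eq_bigr => p _; rewrite !mxE.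
by rewrite !mxdotE; exact: sum_CauchySchwarz.
Qed.

End MatrixDotProduct.

(* The case [m eta alpha <= a] is treated apart: [m eta alpha - a <= P] can only be
   squared when its left side is nonnegative. *)
Lemma perceptron_count_bound (R : realFieldType) (alpha eta a m P : R) :
  0 < alpha -> 0 < eta -> 1 <= a -> 0 <= m ->
  m * (eta * alpha) - a <= P -> P ^+ 2 <= (1 + m * (2 * eta + eta ^+ 2)) * a ^+ 2 ->
  m <= a ^+ 2 / alpha ^+ 2 + (2 / alpha + 2 / alpha ^+ 2) * (a ^+ 2 / eta).
Proof.
move=> alpha_gt0 eta_gt0 a_ge1 m_ge0 P_ge P_sq_le.
have -> : a ^+ 2 / alpha ^+ 2 + (2 / alpha + 2 / alpha ^+ 2) * (a ^+ 2 / eta)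
          = (eta * a ^+ 2 + 2 * alpha * a ^+ 2 + 2 * a ^+ 2) / (alpha ^+ 2 * eta).
  by field; rewrite gt_eqF // gt_eqF.
rewrite ler_pdivlMr ?mulr_gt0 ?exprn_gt0 //.
have a_le_sq : a <= a ^+ 2 by rewrite expr2 ler_peMl // (le_trans ler01).
have eta_a_sq_ge0 : 0 <= eta * a ^+ 2 by rewrite mulr_ge0 ?sqr_ge0 ?ltW.
have alpha_a_le : alpha * a <= alpha * a ^+ 2 by rewrite ler_pM2l.
have [small | large] := lerP (m * (eta * alpha)) a.
  have : alpha * (m * (eta * alpha)) <= alpha * a by rewrite ler_pM2l.
  have : 0 <= a ^+ 2 := sqr_ge0 a.
  rewrite -mulrA; nra.
have diff_gt0 : 0 < m * (eta * alpha) - a by rewrite subr_gt0.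
have diff_sq_le : (m * (eta * alpha) - a) ^+ 2 <= (1 + m * (2 * eta + eta ^+ 2)) * a ^+ 2.
  have P_ge0 : 0 <= P := ltW (lt_le_trans diff_gt0 P_ge).
  by apply: le_trans P_sq_le; apply: lerXn2r; rewrite ?nnegrE ?(ltW diff_gt0).
have m_eta_gt0 : 0 < m * eta.
  by rewrite -(pmulr_lgt0 _ alpha_gt0) -mulrA (le_lt_trans _ large) // (le_trans ler01).
have : m * eta * (m * alpha ^+ 2 * eta - 2 * alpha * a - (2 + eta) * a ^+ 2) <= 0.
  have -> : m * eta * (m * alpha ^+ 2 * eta - 2 * alpha * a - (2 + eta) * a ^+ 2)
            = (m * (eta * alpha) - a) ^+ 2 - (1 + m * (2 * eta + eta ^+ 2)) * a ^+ 2 by ring.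
  by rewrite subr_le0.
rewrite pmulr_rle0 //; lra.
Qed.

Lemma homo_bounded_stationary (f : nat -> nat) (B : nat) :
  {homo f : s t / (s <= t)%N} -> (forall t, (f t <= B)%N) ->
  exists T, forall t, (T <= t)%N -> f t = f T.
Proof.
move=> f_homo f_le.
have attained : exists m, `[< exists t, f t = m >] by exists (f 0%N); apply/asboolP; exists 0%N.
have bounded m : `[< exists t, f t = m >] -> (m <= B)%N by move=> /asboolP [t <-].
case: (ex_maxnP attained bounded) => _ /asboolP [T <-] f_max.
exists T => t le_Tt; apply/eqP; rewrite eqn_leq [(f T <= _)%N]f_homo // andbT.
by apply: f_max; apply/asboolP; exists t.
Qed.

Section LeakyReLU.
Variables (R : realType) (alpha : R).
Hypotheses (alpha_ge0 : 0 <= alpha) (alpha_le1 : alpha <= 1).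

Definition leaky_slope (z : R) : R := if 0 <= z then 1 else alpha.

Lemma leaky_slopeE z : leaky_slope z * z = leaky alpha z.
Proof.
rewrite /leaky_slope /leaky; case: ifPn => [z_ge0 | /negP z_lt0]; apply/esym.
  by rewrite mul1r; apply/max_idPr; rewrite ler_piMl.
by apply/max_idPl; rewrite ler_niMl // ltW // ltNge; apply/negP.
Qed.

Lemma leaky_slope_ge z : alpha <= leaky_slope z.
Proof. by rewrite /leaky_slope; case: ifP. Qed.

Lemma leaky_slope_le1 z : leaky_slope z <= 1.
Proof. by rewrite /leaky_slope; case: ifP. Qed.

End LeakyReLU.

Lemma vsign_sq (R : realType) k (i : 'I_(k + k)) : vsign R i ^+ 2 = 1.
Proof. by rewrite /vsign; case: ifP; rewrite ?sqrrN expr1n. Qed.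

Section SGD.
Variables (R : realType) (alpha v eta : R) (k d : nat).
Hypotheses (alpha_ge0 : 0 <= alpha) (alpha_le1 : alpha <= 1) (eta_ge0 : 0 <= eta).
Hypothesis v_normalized : v ^+ 2 * (k + k)%:R = 1.
Implicit Types (W : 'M[R]_(k + k, d)) (x w : 'rV[R]_d) (y : R).

Lemma sum_v2_const (c : R) : \sum_(i < k + k) v ^+ 2 * c = c.
Proof. by rewrite sumr_const card_ord -mulr_natr mulrAC v_normalized mul1r. Qed.

Definition signed_rows w : 'M[R]_(k + k, d) := \matrix_(i, j) (v * vsign R i * w 0 j).

Lemma row_signed_rows w i : row i (signed_rows w) = (v * vsign R i) *: w.
Proof. by apply/rowP => j; rewrite !mxE. Qed.

Lemma mxdot_signed_rows w : mxdot (signed_rows w) (signed_rows w) = dotp w w.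
Proof.
rewrite -[RHS]sum_v2_const; apply: eq_bigr => i _.
by rewrite row_signed_rows dotpZl dotpC dotpZl mulrA -expr2 exprMn vsign_sq mulr1.
Qed.

Lemma mxdot_self_le1 W : 0 <= v -> (forall i, vnorm (row i W) <= v) -> mxdot W W <= 1.
Proof.
move=> v_ge0 W_le; rewrite -(sum_v2_const 1); apply: ler_sum => i _.
by rewrite mulr1 -vnorm_sq lerXn2r ?nnegrE ?vnorm_ge0.
Qed.

Lemma sgd_step_idle W x y : ~~ nonzero_upd alpha v W x y -> sgd_step alpha v eta W x y = W.
Proof. by rewrite /sgd_step => /negbTE ->. Qed.

Lemma row_sgd_step W x y i : nonzero_upd alpha v W x y ->
  row i (sgd_step alpha v eta W x y)
  = row i W + (eta * v * vsign R i * leaky_slope alpha (dotp (row i W) x) * y) *: x.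
Proof. by move=> upd; apply/rowP => j; rewrite /sgd_step upd !mxE. Qed.

(* Row [i] gains [eta v^2 p y <w, x>] against [signed_rows w], with slope [p >= alpha]. *)
Lemma mxdot_signed_rows_sgd_step w W x y :
  nonzero_upd alpha v W x y -> 1 <= y * dotp w x ->
  mxdot W (signed_rows w) + eta * alpha
    <= mxdot (sgd_step alpha v eta W x y) (signed_rows w).
Proof.
move=> upd margin; rewrite /mxdot -[eta * alpha]sum_v2_const -big_split /=.
apply: ler_sum => i _; rewrite row_sgd_step // dotpDl lerD2l dotpZl.
rewrite row_signed_rows [dotp x _]dotpC dotpZl.
set p := leaky_slope alpha _.
have -> : eta * v * vsign R i * p * y * (v * vsign R i * dotp w x)
          = v ^+ 2 * eta * (vsign R i ^+ 2 * (p * (y * dotp w x))) by ring.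
rewrite vsign_sq mul1r -mulrA ler_wpM2l ?sqr_ge0 // ler_wpM2l //.
have p_ge : alpha <= p := leaky_slope_ge alpha_le1 _.
apply: (le_trans p_ge); rewrite ler_peMr //; exact: le_trans p_ge.
Qed.

(* The cross term is [2 eta y N_W(x) < 2 eta], precisely because the update is non-zero. *)
Lemma mxdot_sgd_step_self W x y :
  nonzero_upd alpha v W x y -> dotp x x <= 1 -> y ^+ 2 = 1 ->
  mxdot (sgd_step alpha v eta W x y) (sgd_step alpha v eta W x y)
    <= mxdot W W + (2 * eta + eta ^+ 2).
Proof.
move=> upd x_le1 y_sq; rewrite /mxdot.
rewrite (eq_bigr (fun i => dotp (row i W) (row i W)
   + 2 * eta * y * (v * vsign R i * leaky alpha (dotp (row i W) x))
   + v ^+ 2 * (eta ^+ 2 * (leaky_slope alpha (dotp (row i W) x) ^+ 2 * dotp x x)))); last first.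
  move=> i _; rewrite row_sgd_step // dotp_addZr -leaky_slopeE //.
  rewrite !exprMn vsign_sq y_sq; ring.
rewrite !big_split /= -addrA lerD2l lerD //.
  rewrite -mulr_sumr -[X in _ <= X]mulr1 -mulrA ler_wpM2l ?mulr_ge0 //; exact: ltW.
rewrite -[X in _ <= X]sum_v2_const; apply: ler_sum => i _.
rewrite ler_wpM2l ?sqr_ge0 // -[X in _ <= X]mulr1 ler_wpM2l ?sqr_ge0 //.
have p_ge0 := le_trans alpha_ge0 (leaky_slope_ge alpha_le1 (dotp (row i W) x)).
rewrite -[1]mulr1 ler_pM ?sqr_ge0 ?dotp_ge0 // expr_le1 //.
exact: leaky_slope_le1.
Qed.

Variables (n : nat) (X : 'I_n -> 'rV[R]_d) (Y : 'I_n -> R) (sched : nat -> 'I_n).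
Variable W0 : 'M[R]_(k + k, d).

Local Notation traj := (sgd_traj alpha v eta X Y sched W0).
Local Notation count := (num_nonzero alpha v eta X Y sched W0).
Local Notation update t := (nonzero_upd alpha v (traj t) (X (sched t)) (Y (sched t))).

Lemma num_nonzeroS t : count t.+1 = (count t + update t)%N.
Proof. by rewrite /num_nonzero big_ord_recr. Qed.

Lemma num_nonzero_homo : {homo count : s t / (s <= t)%N}.
Proof.
by apply: homo_leq => [s|r s t|t]; [exact: leqnn|exact: leq_trans|rewrite num_nonzeroS leq_addr].
Qed.

Lemma potential_traj_ge (phi : 'M[R]_(k + k, d) -> R) (c : R) :
  (forall i W, nonzero_upd alpha v W (X i) (Y i) ->
     phi W + c <= phi (sgd_step alpha v eta W (X i) (Y i))) ->
  forall t, phi W0 + (count t)%:R * c <= phi (traj t).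
Proof.
move=> phi_step; elim=> [|t IH]; first by rewrite /num_nonzero big_ord0 mul0r addr0.
rewrite num_nonzeroS /=; case: (boolP (update t)) => upd.
  by rewrite natrD mulrDl addrA mul1r (le_trans _ (phi_step _ _ upd)) ?lerD2r.
by rewrite addn0 sgd_step_idle.
Qed.

Lemma lossS_ge0 W : 0 <= lossS alpha v X Y W.
Proof. by rewrite divr_ge0 // sumr_ge0 // => i _; rewrite le_max lexx orbT. Qed.

Lemma lossS_eq0 W : (forall i, 1 <= Y i * net alpha v W (X i)) -> lossS alpha v X Y W = 0.
Proof. by move=> fit; rewrite /lossS big1 ?mul0r // => i _; apply/max_idPr; rewrite subr_le0. Qed.

Lemma sgd_converges (B : R) :
  (forall t, (count t)%:R <= B) ->
  (forall (i : 'I_n) (N : nat), exists t, (N <= t)%N /\ sched t = i) ->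
  exists T, forall t, (T <= t)%N ->
    forall W', lossS alpha v X Y (traj t) <= lossS alpha v X Y W'.
Proof.
move=> count_le visits.
have [T count_stable] : exists T, forall t, (T <= t)%N -> count t = count T.
  apply: (homo_bounded_stationary (B := Num.bound B) num_nonzero_homo) => t.
  rewrite -(ler_nat R) (le_trans (count_le t)) // ltW // archi_boundP //.
  exact: le_trans (count_le 0%N).
have idle t : (T <= t)%N -> ~~ update t.
  move=> le_Tt; apply/negP => upd; have := num_nonzeroS t.
  by rewrite !count_stable ?(leqW le_Tt) // upd addn1 => /n_Sn.
have frozen t : (T <= t)%N -> traj t = traj T.
  move=> /subnKC <-; elim: (t - T)%N => [|s IH]; first by rewrite addn0.
  by rewrite addnS /= sgd_step_idle ?idle ?leq_addr.
have fitted i : 1 <= Y i * net alpha v (traj T) (X i).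
  have [t [le_Tt <-]] := visits i T.
  by have := idle t le_Tt; rewrite /nonzero_upd frozen // -leNgt.
exists T => t le_Tt W'; rewrite frozen // lossS_eq0 //; exact: lossS_ge0.
Qed.

Hypotheses (X_le1 : forall i, dotp (X i) (X i) <= 1) (Y_sq : forall i, Y i ^+ 2 = 1).
Hypothesis (W0_le1 : mxdot W0 W0 <= 1).

Lemma mxdot_traj_self_le t : mxdot (traj t) (traj t) <= 1 + (count t)%:R * (2 * eta + eta ^+ 2).
Proof.
have step i W : nonzero_upd alpha v W (X i) (Y i) ->
    - mxdot W W - (2 * eta + eta ^+ 2)
      <= - mxdot (sgd_step alpha v eta W (X i) (Y i)) (sgd_step alpha v eta W (X i) (Y i)).
  by move=> upd; rewrite -opprD lerN2 mxdot_sgd_step_self.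
have := potential_traj_ge (phi := fun W => - mxdot W W) step t.
by rewrite mulrN -opprD lerN2 => /le_trans; apply; rewrite lerD2r.
Qed.

Variable w : 'rV[R]_d.
Hypothesis margin : forall i, 1 <= Y i * dotp w (X i).

Lemma num_nonzero_le t : 0 < alpha -> 0 < eta ->
  (count t)%:R <= vnorm w ^+ 2 / alpha ^+ 2 + (2 / alpha + 2 / alpha ^+ 2) * (vnorm w ^+ 2 / eta).
Proof.
move=> alpha_gt0 eta_gt0; set U := signed_rows w.
have w_ge1 : 1 <= vnorm w := vnorm_ge1_of_margin (X_le1 (sched 0)) (Y_sq _) (margin _).
have UU : mxdot U U = vnorm w ^+ 2 by rewrite mxdot_signed_rows vnorm_sq.
have W0U_ge : - vnorm w <= mxdot W0 U.
  have : `|mxdot W0 U| <= vnorm w.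
    rewrite -ler_sqr ?nnegrE ?vnorm_ge0 // real_normK ?num_real // -UU.
    apply: le_trans (mxdot_CauchySchwarz _ _) _.
    by rewrite ler_piMl ?mxdot_ge0.
  by rewrite ler_norml => /andP[].
have U_step i W : nonzero_upd alpha v W (X i) (Y i) ->
    mxdot W U + eta * alpha <= mxdot (sgd_step alpha v eta W (X i) (Y i)) U.
  by move=> upd; exact: mxdot_signed_rows_sgd_step.
apply: (perceptron_count_bound (P := mxdot (traj t) U)) => //.
  apply: le_trans (potential_traj_ge (phi := fun W => mxdot W U) U_step t).
  by rewrite [leRHS]addrC lerD2l.
apply: le_trans (mxdot_CauchySchwarz _ _) _.
by rewrite UU ler_wpM2r ?sqr_ge0 ?mxdot_traj_self_le.
Qed.

End SGD.

Theorem corollary1 (R : realType) (alpha : R) :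
  0 < alpha < 1 ->
  exists C : R, 0 < C /\
  forall (d k n : nat) (X : 'I_n -> 'rV[R]_d) (Y : 'I_n -> R)
         (wstar : 'rV[R]_d) (eta : R) (W0 : 'M[R]_(k + k, d))
         (sched : nat -> 'I_n),
    (0 < k)%N ->
    (forall i, vnorm (X i) <= 1) ->
    (forall i, Y i = 1 \/ Y i = -1) ->
    (forall i, 1 <= Y i * dotp wstar (X i)) ->
    0 < eta ->
    (forall i, vnorm (row i W0) <= 1 / Num.sqrt (2 * k%:R)) ->
    let v := 1 / Num.sqrt (2 * k%:R) in
    (forall T : nat,
       (num_nonzero alpha v eta X Y sched W0 T)%:R
         <= vnorm wstar ^+ 2 / alpha ^+ 2
            + C * (vnorm wstar ^+ 2 / Num.min eta (Num.sqrt eta)))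
    /\
    ((forall (i : 'I_n) (N : nat), exists t, (N <= t)%N /\ sched t = i) ->
     exists T : nat, forall t : nat, (T <= t)%N ->
       forall W' : 'M[R]_(k + k, d),
         lossS alpha v X Y (sgd_traj alpha v eta X Y sched W0 t)
           <= lossS alpha v X Y W').
Proof.
case/andP => alpha_gt0 alpha_lt1.
exists (2 / alpha + 2 / alpha ^+ 2); split; first by rewrite addr_gt0 // divr_gt0 ?exprn_gt0.
move=> d k n X Y w eta W0 sched k_gt0 X_le1 Y_pm1 margin eta_gt0 W0_le v.
have two_k_gt0 : 0 < 2 * k%:R :> R by rewrite mulr_gt0 ?ltr0n.
have v_ge0 : 0 <= v by rewrite divr_ge0 ?sqrtr_ge0.
have v_normalized : v ^+ 2 * (k + k)%:R = 1.
  by rewrite expr_div_n sqr_sqrtr ?ltW // natrD; field; rewrite pnatr_eq0 -lt0n.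
have Y_sq i : Y i ^+ 2 = 1 by case: (Y_pm1 i) => ->; rewrite ?sqrrN expr1n.
have X_le1' i : dotp (X i) (X i) <= 1 by rewrite -vnorm_le1.
have W0_le1 := mxdot_self_le1 v_normalized v_ge0 W0_le.
have count_le T := num_nonzero_le (ltW alpha_gt0) (ltW alpha_lt1) (ltW eta_gt0)
  v_normalized sched X_le1' Y_sq W0_le1 margin T alpha_gt0 eta_gt0.
have count_le' T : (num_nonzero alpha v eta X Y sched W0 T)%:R
    <= vnorm w ^+ 2 / alpha ^+ 2
       + (2 / alpha + 2 / alpha ^+ 2) * (vnorm w ^+ 2 / Num.min eta (Num.sqrt eta)).
  apply: le_trans (count_le T) _; rewrite lerD2l; apply: ler_wpM2l.
    by rewrite addr_ge0 // divr_ge0 ?exprn_ge0 ?ltW.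
  apply: ler_wpM2l; first exact: sqr_ge0.
  by rewrite lef_pV2 ?posrE ?ge_min ?lexx // lt_min eta_gt0 sqrtr_gt0.
by split=> // visits; exact: sgd_converges count_le' visits.
Qed.
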